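(* For $p\in\mathbb{R}$ let $H_p:[0,\infty)^2\to[0,\infty)$ be $$H_p(r,t)=\frac{2}{p}\Big[\mathfrak{M}_1(r,t)-\mathfrak{M}_{1-p}(r,t)\Big]\ (p\neq 0),\qquad H_0(r,t)=r\ln r+t\ln t-(r+t)\ln\Big(\frac{r+t}{2}\Big)$$ (with $0\ln 0=0$). Then for every $p\in(-\infty,\tfrac12]\cup[1,+\infty)$ the function $\sqrt{H_p}$ is a metric on $[0,+\infty)$. For every $p\in(\tfrac12,1)$, $\sqrt{H_p}$ does not satisfy the triangle inequality on $[0,+\infty)$.
   Context: Power means: for $r,t\ge 0$ and $q\neq 0$, $\mathfrak{M}_q(r,t)=\big(\frac{r^q+t^q}{2}\big)^{1/q}$, except that $\mathfrak{M}_q(r,t)=0$ when $q<0$ and $r=0$ or $t=0$; $\mathfrak{M}_0(r,t)=\sqrt{rt}$. The function $H_p$ is the marginal perspective function $H_{U_p}$ induced by the power-like entropy $U_p(s)=\frac{1}{p(p-1)}(s^p-p(s-1)-1)$ ($p\neq0,1$), $U_1(s)=s\ln s-s+1$, $U_0(s)=s-1-\ln s$, i.e. the lower semicontinuous envelope of $(r,t)\mapsto\inf_{\theta>0}\big[tU_p(\theta/t)+rU_p(\theta/r)\big]$; the closed formula above is given. A function $D:[0,\infty)^2\to[0,\infty)$ is a metric on $[0,\infty)$ if $D(x,y)=0\iff x=y$, $D$ is symmetric, and $D(x,z)\le D(x,y)+D(y,z)$ for all $x,y,z$. *)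

From Stdlib Require Import Reals Lra.
Open Scope R_scope.

(* x^y for x >= 0, with the convention 0^y = 0 (used only for y > 0). *)
Definition rpow (x y : R) : R := if Req_EM_T x 0 then 0 else Rpower x y.

Definition xlnx (x : R) : R := if Req_EM_T x 0 then 0 else x * ln x.

Definition powmean (q r t : R) : R :=
  if Req_EM_T q 0 then sqrt (r * t)
  else if Rlt_dec q 0 then
    (if Req_EM_T r 0 then 0 else if Req_EM_T t 0 then 0
     else Rpower ((Rpower r q + Rpower t q) / 2) (/ q))
  else rpow ((rpow r q + rpow t q) / 2) (/ q).

Definition Hp (p r t : R) : R :=
  if Req_EM_T p 0 then xlnx r + xlnx t
       - (if Req_EM_T (r + t) 0 then 0 else (r + t) * ln ((r + t) / 2))
  else (2 / p) * (powmean 1 r t - powmean (1 - p) r t).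


Definition triangle_on_nonneg (D : R -> R -> R) : Prop :=
  forall x y z, 0 <= x -> 0 <= y -> 0 <= z -> D x z <= D x y + D y z.

Definition is_metric_on_nonneg (D : R -> R -> R) : Prop :=
  (forall x y, 0 <= x -> 0 <= y -> (D x y = 0 <-> x = y)) /\
  (forall x y, 0 <= x -> 0 <= y -> D x y = D y x) /\
  triangle_on_nonneg D.

(* For a symmetric, 1-homogeneous [H], the relevant quantity is the ratio [ψ(s) = H(s², 1)/(1 − s)²]
   of [H] to the squared Hellinger distance [H_1(r, t) = (√r − √t)²]: for [x < z],
   [√H(x, z) = (√z − √x) √ψ(√x/√z)]. If [ψ] is nondecreasing on [0, 1) and [t ↦ H(t, 1)] is
   nonincreasing on [0, 1], then [√H] is a metric: for [x ≤ y ≤ z] the Hellinger factors add up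
   and the ratio at [√x/√z] is dominated by the ratios at [√x/√y] and [√y/√z], while the other
   orderings reduce to the monotonicity of [H(·, 1)].
   For [H = H_p] and [λ = ln s < 0], the sign of [ψ'(s)] is that of [p(1 − p)] times a linear
   combination of values of [L(t) = ln((1 + e^{tλ})/2)], which is controlled by comparing chord
   slopes of [h ↦ L(k + h) − L(k − h)], whose derivative [λ(σ(k + h) + σ(k − h))] decreases in [h].
   Hence [ψ] is nondecreasing for [p ∉ (1/2, 1)], and strictly decreasing for [p ∈ (1/2, 1)], where
   the triangle inequality fails at [1/16, 1/4, 1]. *)

From Stdlib Require Import Reals Lra Psatz.
From Coquelicot Require Import Coquelicot.
Open Scope R_scope.

(** * A criterion for [√H] to be a metric *)

Definition hellinger_ratio (H : R -> R -> R) (s : R) : R :=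
  H (s * s) 1 / ((1 - s) * (1 - s)).

Section SqrtMetricCriterion.

Variable H : R -> R -> R.
Hypothesis H_sym : forall x y, H x y = H y x.
Hypothesis H_hom : forall x y, 0 <= x -> 0 < y -> H x y = y * H (x / y) 1.
Hypothesis H_0_0 : H 0 0 = 0.
Hypothesis H_1_1 : H 1 1 = 0.
Hypothesis H_0_1_pos : 0 < H 0 1.
Hypothesis ratio_mono : forall s1 s2, 0 <= s1 -> s1 <= s2 -> s2 < 1 ->
  hellinger_ratio H s1 <= hellinger_ratio H s2.
Hypothesis H_antitone : forall t1 t2, 0 <= t1 -> t1 <= t2 -> t2 <= 1 -> H t2 1 <= H t1 1.

Let D x y := sqrt (H x y).

Lemma hellinger_ratio_pos s : 0 <= s < 1 -> 0 < hellinger_ratio H s.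
Proof.
  intros Hs.
  assert (E : hellinger_ratio H 0 = H 0 1) by (unfold hellinger_ratio; rewrite Rmult_0_l; field).
  pose proof (ratio_mono 0 s ltac:(lra) ltac:(lra) ltac:(lra)). lra.
Qed.

Lemma H_pos_1 t : 0 <= t < 1 -> 0 < H t 1.
Proof.
  intros Ht. set (s := sqrt t).
  assert (Es : s * s = t) by (apply sqrt_sqrt; lra).
  assert (Hs : 0 <= s < 1).
  { split; [apply sqrt_pos|]. unfold s. rewrite <- sqrt_1. apply sqrt_lt_1; lra. }
  pose proof (hellinger_ratio_pos s Hs) as Hr. unfold hellinger_ratio in Hr. rewrite Es in Hr.
  replace (H t 1) with (H t 1 / ((1 - s) * (1 - s)) * ((1 - s) * (1 - s))) by (field; lra).
  apply Rmult_lt_0_compat; nra.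
Qed.

Lemma H_diag x : 0 <= x -> H x x = 0.
Proof.
  intros Hx. destruct (Req_dec x 0) as [->|Hx0]; auto.
  rewrite H_hom by lra. replace (x / x) with 1 by (field; lra). rewrite H_1_1; ring.
Qed.

Lemma H_pos x y : 0 <= x -> x < y -> 0 < H x y.
Proof.
  intros Hx Hxy. rewrite H_hom by lra.
  apply Rmult_lt_0_compat; [lra|]. apply H_pos_1. split.
  - apply Rdiv_le_0_compat; lra.
  - apply (Rmult_lt_reg_r y); [lra|]. field_simplify; lra.
Qed.

Lemma D_hellinger_factor x z : 0 <= x -> x < z ->
  D x z = (sqrt z - sqrt x) * sqrt (hellinger_ratio H (sqrt x / sqrt z)).
Proof.
  intros Hx Hxz. unfold D.
  assert (Hz : 0 < sqrt z) by (apply sqrt_lt_R0; lra).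
  assert (Hxz' : sqrt x < sqrt z) by (apply sqrt_lt_1; lra).
  pose proof (sqrt_pos x).
  set (s := sqrt x / sqrt z).
  assert (Hs : 0 <= s < 1).
  { unfold s. split; [apply Rdiv_le_0_compat; lra|].
    apply (Rmult_lt_reg_r (sqrt z)); auto. field_simplify; lra. }
  assert (Ess : s * s = x / z).
  { unfold s. replace (sqrt x / sqrt z * (sqrt x / sqrt z)) with ((sqrt x * sqrt x) / (sqrt z * sqrt z))
      by (field; lra). rewrite !sqrt_sqrt; lra. }
  assert (Ez : z * ((1 - s) * (1 - s)) = (sqrt z - sqrt x) * (sqrt z - sqrt x)).
  { unfold s. rewrite <- (sqrt_sqrt z) at 1 by lra. field. lra. }
  pose proof (hellinger_ratio_pos s Hs).
  rewrite H_hom, <- Ess by lra.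
  replace (H (s * s) 1) with (hellinger_ratio H s * ((1 - s) * (1 - s)))
    by (unfold hellinger_ratio; field; lra).
  replace (z * _) with (z * ((1 - s) * (1 - s)) * hellinger_ratio H s) by ring.
  rewrite Ez, sqrt_mult by (nra || lra). rewrite sqrt_square; lra.
Qed.

Lemma D_triangle_ordered x y z : 0 <= x -> x <= y -> y <= z -> D x z <= D x y + D y z.
Proof.
  intros Hx Hxy Hyz.
  destruct (Req_dec x y) as [<-|Nxy].
  { unfold D at 2. rewrite H_diag, sqrt_0; lra. }
  destruct (Req_dec y z) as [<-|Nyz].
  { unfold D at 3. rewrite H_diag, sqrt_0 by lra. lra. }
  rewrite !D_hellinger_factor by lra.
  pose proof (sqrt_pos x).
  assert (Hxy' : sqrt x < sqrt y) by (apply sqrt_lt_1; lra).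
  assert (Hyz' : sqrt y < sqrt z) by (apply sqrt_lt_1; lra).
  set (a := sqrt x) in *. set (b := sqrt y) in *. set (c := sqrt z) in *.
  assert (Rxz_xy : hellinger_ratio H (a / c) <= hellinger_ratio H (a / b)).
  { apply ratio_mono.
    - apply Rdiv_le_0_compat; lra.
    - apply Rmult_le_compat_l; [lra|]. apply Rinv_le_contravar; lra.
    - apply (Rmult_lt_reg_r b); [lra|]. field_simplify; lra. }
  assert (Rxz_yz : hellinger_ratio H (a / c) <= hellinger_ratio H (b / c)).
  { apply ratio_mono.
    - apply Rdiv_le_0_compat; lra.
    - apply Rmult_le_compat_r; [left; apply Rinv_0_lt_compat|]; lra.
    - apply (Rmult_lt_reg_r c); [lra|]. field_simplify; lra. }
  apply sqrt_le_1_alt in Rxz_xy, Rxz_yz.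
  replace (c - a) with ((b - a) + (c - b)) by ring. nra.
Qed.

Lemma D_le_outer x y z : 0 <= x -> x <= z -> z <= y -> D x z <= D x y.
Proof.
  intros Hx Hxz Hzy. apply sqrt_le_1_alt.
  destruct (Req_dec z 0) as [->|Nz].
  { replace x with 0 by lra. rewrite H_0_0.
    destruct (Req_dec y 0) as [->|Ny]; [lra|]. left; apply H_pos; lra. }
  rewrite (H_hom x z), (H_hom x y) by lra.
  assert (Hb : 0 <= x / y) by (apply Rdiv_le_0_compat; lra).
  assert (Hbc : x / y <= x / z) by (apply Rmult_le_compat_l; [lra|]; apply Rinv_le_contravar; lra).
  assert (Hc : x / z <= 1) by (apply (Rmult_le_reg_r z); [lra|]; field_simplify; lra).
  pose proof (H_antitone _ _ Hb Hbc Hc).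
  assert (0 <= H (x / y) 1).
  { destruct (Req_dec (x / y) 1) as [->|N]; [lra|]. left; apply H_pos_1; lra. }
  nra.
Qed.

Lemma D_le_inner x y z : 0 <= y -> y <= x -> x <= z -> D x z <= D y z.
Proof.
  intros Hy Hyx Hxz. apply sqrt_le_1_alt.
  destruct (Req_dec z 0) as [->|Nz].
  { replace x with 0 by lra. replace y with 0 by lra. lra. }
  rewrite (H_hom x z), (H_hom y z) by lra.
  assert (Hb : 0 <= y / z) by (apply Rdiv_le_0_compat; lra).
  assert (Hbc : y / z <= x / z) by (apply Rmult_le_compat_r; [left; apply Rinv_0_lt_compat|]; lra).
  assert (Hc : x / z <= 1) by (apply (Rmult_le_reg_r z); [lra|]; field_simplify; lra).
  pose proof (H_antitone _ _ Hb Hbc Hc). nra.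
Qed.

Lemma D_triangle_le x y z : 0 <= x -> 0 <= y -> x <= z -> D x z <= D x y + D y z.
Proof.
  intros Hx Hy Hxz.
  pose proof (sqrt_pos (H x y)). pose proof (sqrt_pos (H y z)).
  destruct (Rle_dec x y) as [Hxy|Hxy]; [destruct (Rle_dec y z) as [Hyz|Hyz]|].
  - apply D_triangle_ordered; lra.
  - pose proof (D_le_outer x y z Hx Hxz ltac:(lra)). fold (D x y) (D y z) in *. lra.
  - pose proof (D_le_inner x y z Hy ltac:(lra) Hxz). fold (D x y) (D y z) in *. lra.
Qed.

Lemma sqrt_metric_of_hellinger_ratio : is_metric_on_nonneg (fun r t => sqrt (H r t)).
Proof.
  split; [|split].
  - intros x y Hx Hy. split.
    + intros E. destruct (Rtotal_order x y) as [Hl|[He|Hg]]; auto; exfalso.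
      * pose proof (sqrt_lt_R0 _ (H_pos x y Hx Hl)). lra.
      * rewrite H_sym in E. pose proof (sqrt_lt_R0 _ (H_pos y x Hy Hg)). lra.
    + intros <-. rewrite H_diag by auto. apply sqrt_0.
  - intros x y _ _. rewrite H_sym. reflexivity.
  - intros x y z Hx Hy Hz. fold (D x z) (D x y) (D y z).
    destruct (Rle_dec x z) as [Hxz|Hxz].
    + apply D_triangle_le; auto.
    + unfold D. rewrite (H_sym x z), (H_sym x y), (H_sym y z).
      fold (D z x) (D y x) (D z y). pose proof (D_triangle_le z y x Hz Hy ltac:(lra)). lra.
Qed.

End SqrtMetricCriterion.

Lemma exp_le x y : x <= y -> exp x <= exp y.
Proof. intros [Hxy|<-]; [left; apply exp_increasing|]; lra. Qed.

Lemma continuity_pt_is_derive (f : R -> R) (x l : R) : is_derive f x l -> continuity_pt f x.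
Proof.
  intros Hf. apply continuity_pt_filterlim, (ex_derive_continuous f x). exists l; exact Hf.
Qed.

Lemma nondecreasing_is_derive f df a b : a <= b ->
  (forall x, a < x < b -> is_derive f x (df x)) ->
  (forall x, a < x < b -> 0 <= df x) ->
  continuity_pt f a -> continuity_pt f b -> f a <= f b.
Proof.
  intros Hab Hd Hs Ca Cb. destruct (Req_dec a b) as [<-|Nab]; [lra|].
  (* [df] is replaced by [0] at the end points, where the MVT point may fall. *)
  set (df' x := if Rlt_dec a x then if Rlt_dec x b then df x else 0 else 0).
  destruct (MVT_gen f a b df') as [c [Hc E]]; rewrite ?Rmin_left, ?Rmax_right in * by lra.
  - intros x Hx. unfold df'.
    destruct (Rlt_dec a x); [|lra]. destruct (Rlt_dec x b); [|lra]. apply Hd; lra.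
  - intros x Hx.
    destruct (Req_dec x a) as [->|]; auto. destruct (Req_dec x b) as [->|]; auto.
    apply (continuity_pt_is_derive f x (df x)), Hd; lra.
  - assert (0 <= df' c).
    { unfold df'. destruct (Rlt_dec a c); [|lra]. destruct (Rlt_dec c b); [|lra]. apply Hs; lra. }
    nra.
Qed.

Lemma nonincreasing_is_derive f df a b : a <= b ->
  (forall x, a < x < b -> is_derive f x (df x)) ->
  (forall x, a < x < b -> df x <= 0) ->
  continuity_pt f a -> continuity_pt f b -> f b <= f a.
Proof.
  intros Hab Hd Hs Ca Cb.
  enough (- f a <= - f b) by lra.
  apply (nondecreasing_is_derive (fun x => - f x) (fun x => - df x)); auto.
  - intros x Hx. apply (is_derive_opp f x (df x)), Hd, Hx.
  - intros x Hx. pose proof (Hs x Hx). lra.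
  - apply continuity_pt_opp, Ca.
  - apply continuity_pt_opp, Cb.
Qed.

Section ChordSlope.

Variables f df : R -> R.
Hypothesis f_0 : f 0 = 0.
Hypothesis f_derive : forall x, is_derive f x (df x).

Lemma chord_slope_mvt h1 h2 : 0 < h1 < h2 -> exists c1 c2, 0 < c1 < h1 /\ h1 < c2 < h2 /\
  h2 * f h1 - h1 * f h2 = h1 * (h2 - h1) * (df c1 - df c2).
Proof.
  intros Hh.
  assert (Hmvt : forall a b, a < b -> exists c, f b - f a = df c * (b - a) /\ a < c < b).
  { intros a b Hab. apply MVT_cor2; auto. intros c _. apply is_derive_Reals, f_derive. }
  destruct (Hmvt 0 h1 ltac:(lra)) as [c1 [E1 R1]].
  destruct (Hmvt h1 h2 ltac:(lra)) as [c2 [E2 R2]].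
  exists c1, c2. repeat split; try lra.
  rewrite f_0 in E1.
  replace (f h2) with (f h1 + df c2 * (h2 - h1)) by lra.
  replace (f h1) with (df c1 * h1) by lra. ring.
Qed.

Lemma chord_le_derive_0 h : (forall u, 0 <= u -> df u <= df 0) -> 0 < h -> f h <= h * df 0.
Proof.
  intros Hdf Hh.
  destruct (MVT_cor2 f df 0 h Hh) as [c [E Hc]].
  { intros c _. apply is_derive_Reals, f_derive. }
  rewrite f_0 in E. pose proof (Hdf c ltac:(lra)). nra.
Qed.

Lemma chord_slope_le h1 h2 : (forall u v, 0 <= u -> u <= v -> df v <= df u) ->
  0 < h1 -> h1 <= h2 -> h1 * f h2 <= h2 * f h1.
Proof.
  intros Hdf H1 H12. destruct (Req_dec h1 h2) as [<-|N12]; [lra|].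
  destruct (chord_slope_mvt h1 h2 ltac:(lra)) as (c1 & c2 & R1 & R2 & E).
  pose proof (Hdf c1 c2 ltac:(lra) ltac:(lra)).
  assert (0 <= h1 * (h2 - h1) * (df c1 - df c2)) by (apply Rmult_le_pos; nra). lra.
Qed.

Lemma chord_slope_lt h1 h2 : (forall u v, 0 <= u -> u < v -> df v < df u) ->
  0 < h1 -> h1 < h2 -> h1 * f h2 < h2 * f h1.
Proof.
  intros Hdf H1 H12.
  destruct (chord_slope_mvt h1 h2 ltac:(lra)) as (c1 & c2 & R1 & R2 & E).
  pose proof (Hdf c1 c2 ltac:(lra) ltac:(lra)).
  assert (0 < h1 * (h2 - h1) * (df c1 - df c2)) by (apply Rmult_lt_0_compat; nra). lra.
Qed.

End ChordSlope.

(** * The gap [L(k + h) − L(k − h)] *)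

Definition logmeanexp (lam t : R) : R := ln ((1 + exp (t * lam)) / 2).
Definition sigmoid (lam t : R) : R := exp (t * lam) / (1 + exp (t * lam)).
Definition logmeanexp_gap (lam k h : R) : R := logmeanexp lam (k + h) - logmeanexp lam (k - h).

Lemma logmeanexp_0 lam : logmeanexp lam 0 = 0.
Proof. unfold logmeanexp. rewrite Rmult_0_l, exp_0. replace ((1 + 1) / 2) with 1 by field. apply ln_1. Qed.

Lemma logmeanexp_opp lam t : logmeanexp lam (- t) = logmeanexp lam t - t * lam.
Proof.
  unfold logmeanexp. pose proof (exp_pos (t * lam)).
  replace ((1 + exp (- t * lam)) / 2) with (exp (- (t * lam)) * ((1 + exp (t * lam)) / 2)).
  - rewrite ln_mult, ln_exp by (apply exp_pos || lra). ring.
  - replace (- t * lam) with (- (t * lam)) by ring. rewrite exp_Ropp. field. lra.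
Qed.

Lemma exp_logmeanexp lam t : exp (logmeanexp lam t) = (1 + exp (t * lam)) / 2.
Proof. unfold logmeanexp. rewrite exp_ln; auto. pose proof (exp_pos (t * lam)); lra. Qed.

Lemma is_derive_logmeanexp_gap lam k h :
  is_derive (logmeanexp_gap lam k) h (lam * (sigmoid lam (k + h) + sigmoid lam (k - h))).
Proof.
  unfold logmeanexp_gap, logmeanexp, sigmoid.
  pose proof (exp_pos ((k + h) * lam)). pose proof (exp_pos ((k - h) * lam)).
  auto_derive; replace (k + - h) with (k - h) by ring.
  - repeat split; lra.
  - field; lra.
Qed.

Lemma sigmoid_sum_eq lam k h : sigmoid lam (k + h) + sigmoid lam (k - h) =
  1 / (1 + exp (- (k * lam)) * exp (- (h * lam))) +
  exp (- (h * lam)) / (exp (- (k * lam)) + exp (- (h * lam))).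
Proof.
  unfold sigmoid.
  set (A := exp (- (k * lam))). set (B := exp (- (h * lam))).
  assert (HA : 0 < A) by apply exp_pos. assert (HB : 0 < B) by apply exp_pos.
  assert (Ep : exp ((k + h) * lam) = / (A * B)).
  { replace ((k + h) * lam) with (- (- (k * lam) + - (h * lam))) by ring.
    rewrite exp_Ropp, exp_plus. reflexivity. }
  assert (Em : exp ((k - h) * lam) = B * / A).
  { replace ((k - h) * lam) with (- (h * lam) + - - (k * lam)) by ring.
    rewrite exp_plus, (exp_Ropp (- (k * lam))). reflexivity. }
  rewrite Ep, Em. field. repeat split; nra.
Qed.

Lemma sigmoid_pair_sub A B1 B2 : 0 < A -> 0 < B1 -> 0 < B2 ->
  (1 / (1 + A * B2) + B2 / (A + B2)) - (1 / (1 + A * B1) + B1 / (A + B1)) =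
  A * (B2 - B1) * ((A * A - 1) * (B1 * B2 - 1)) / ((1 + A * B1) * (1 + A * B2) * (A + B1) * (A + B2)).
Proof. intros. field. repeat split; nra. Qed.

Lemma sigmoid_sum_le lam k u v : lam < 0 -> 0 <= k -> 0 <= u -> u <= v ->
  sigmoid lam (k + u) + sigmoid lam (k - u) <= sigmoid lam (k + v) + sigmoid lam (k - v).
Proof.
  intros Hl Hk Hu Huv. rewrite !sigmoid_sum_eq.
  assert (HA : 1 <= exp (- (k * lam))) by (rewrite <- exp_0; apply exp_le; nra).
  assert (HB : 1 <= exp (- (u * lam))) by (rewrite <- exp_0; apply exp_le; nra).
  assert (HBB : exp (- (u * lam)) <= exp (- (v * lam))) by (apply exp_le; nra).
  set (A := exp (- (k * lam))) in *.
  set (B1 := exp (- (u * lam))) in *. set (B2 := exp (- (v * lam))) in *.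
  enough (0 <= (1 / (1 + A * B2) + B2 / (A + B2)) - (1 / (1 + A * B1) + B1 / (A + B1))) by lra.
  rewrite sigmoid_pair_sub by lra.
  apply Rdiv_le_0_compat; [|repeat apply Rmult_lt_0_compat; nra].
  apply Rmult_le_pos; [nra|]. apply Rmult_le_pos; nra.
Qed.

Lemma sigmoid_sum_lt lam k u v : lam < 0 -> 0 < k -> 0 <= u -> u < v ->
  sigmoid lam (k + u) + sigmoid lam (k - u) < sigmoid lam (k + v) + sigmoid lam (k - v).
Proof.
  intros Hl Hk Hu Huv. rewrite !sigmoid_sum_eq.
  assert (HA : 1 < exp (- (k * lam))) by (rewrite <- exp_0; apply exp_increasing; nra).
  assert (HB : 1 <= exp (- (u * lam))) by (rewrite <- exp_0; apply exp_le; nra).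
  assert (HBB : exp (- (u * lam)) < exp (- (v * lam))) by (apply exp_increasing; nra).
  set (A := exp (- (k * lam))) in *.
  set (B1 := exp (- (u * lam))) in *. set (B2 := exp (- (v * lam))) in *.
  enough (0 < (1 / (1 + A * B2) + B2 / (A + B2)) - (1 / (1 + A * B1) + B1 / (A + B1))) by lra.
  rewrite sigmoid_pair_sub by lra.
  apply Rdiv_lt_0_compat; [|repeat apply Rmult_lt_0_compat; nra].
  apply Rmult_lt_0_compat; [nra|]. apply Rmult_lt_0_compat; nra.
Qed.

Section LogmeanexpGap.

Variables lam k : R.
Hypothesis lam_neg : lam < 0.
Let dgap h := lam * (sigmoid lam (k + h) + sigmoid lam (k - h)).

Lemma logmeanexp_gap_0 : logmeanexp_gap lam k 0 = 0.
Proof. unfold logmeanexp_gap. rewrite Rplus_0_r, Rminus_0_r. ring. Qed.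

Lemma logmeanexp_gap_chord_le h1 h2 : 0 <= k -> 0 < h1 -> h1 <= h2 ->
  h1 * logmeanexp_gap lam k h2 <= h2 * logmeanexp_gap lam k h1.
Proof.
  intros Hk. apply (chord_slope_le _ dgap logmeanexp_gap_0 (is_derive_logmeanexp_gap lam k)).
  intros u v Hu Huv. pose proof (sigmoid_sum_le lam k u v lam_neg Hk Hu Huv). unfold dgap. nra.
Qed.

Lemma logmeanexp_gap_chord_lt h1 h2 : 0 < k -> 0 < h1 -> h1 < h2 ->
  h1 * logmeanexp_gap lam k h2 < h2 * logmeanexp_gap lam k h1.
Proof.
  intros Hk. apply (chord_slope_lt _ dgap logmeanexp_gap_0 (is_derive_logmeanexp_gap lam k)).
  intros u v Hu Huv. pose proof (sigmoid_sum_lt lam k u v lam_neg Hk Hu Huv). unfold dgap. nra.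
Qed.

Lemma logmeanexp_gap_le h : 0 <= k -> 0 < h -> logmeanexp_gap lam k h <= h * dgap 0.
Proof.
  intros Hk. apply (chord_le_derive_0 _ dgap logmeanexp_gap_0 (is_derive_logmeanexp_gap lam k)).
  intros u Hu. pose proof (sigmoid_sum_le lam k 0 u lam_neg Hk ltac:(lra) Hu). unfold dgap. nra.
Qed.

End LogmeanexpGap.

(* With [λ = ln s] and [q = 1 − p], the slope of the Hellinger ratio of [H_p] at [s] has the sign
   of [p q · mean_defect λ q] (see [Gp_slope_numerator]). *)
Definition mean_defect (lam q : R) : R :=
  q * (logmeanexp lam 1 - logmeanexp lam (2 * q - 1)) - (1 - q) * logmeanexp lam (2 * q).

Section MeanDefect.

Variable lam : R.
Hypothesis lam_neg : lam < 0.

Lemma mean_defect_nonneg q : 1/2 <= q < 1 -> 0 <= mean_defect lam q.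
Proof.
  intros Hq.
  pose proof (logmeanexp_gap_chord_le lam q lam_neg (1 - q) q ltac:(lra) ltac:(lra) ltac:(lra)) as C.
  unfold logmeanexp_gap in C.
  replace (q + q) with (2 * q) in C by ring. replace (q - q) with 0 in C by ring.
  replace (q + (1 - q)) with 1 in C by ring. replace (q - (1 - q)) with (2 * q - 1) in C by ring.
  rewrite logmeanexp_0 in C. unfold mean_defect. lra.
Qed.

Lemma mean_defect_nonpos_gt1 q : 1 < q -> mean_defect lam q <= 0.
Proof.
  intros Hq.
  pose proof (logmeanexp_gap_chord_le lam q lam_neg (q - 1) q ltac:(lra) ltac:(lra) ltac:(lra)) as C.
  unfold logmeanexp_gap in C.
  replace (q + q) with (2 * q) in C by ring. replace (q - q) with 0 in C by ring.
  replace (q + (q - 1)) with (2 * q - 1) in C by ring. replace (q - (q - 1)) with 1 in C by ring.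
  rewrite logmeanexp_0 in C. unfold mean_defect. lra.
Qed.

Lemma mean_defect_nonpos_neg q : q < 0 -> mean_defect lam q <= 0.
Proof.
  intros Hq.
  pose proof (logmeanexp_gap_chord_le lam (- q) lam_neg (- q) (1 - q) ltac:(lra) ltac:(lra) ltac:(lra)) as C.
  unfold logmeanexp_gap in C.
  replace (- q + - q) with (- (2 * q)) in C by ring. replace (- q - - q) with 0 in C by ring.
  replace (- q + (1 - q)) with (- (2 * q - 1)) in C by ring. replace (- q - (1 - q)) with (- (1)) in C by ring.
  rewrite logmeanexp_0, !logmeanexp_opp in C. unfold mean_defect. nra.
Qed.

Lemma mean_defect_neg q : 0 < q < 1/2 -> mean_defect lam q < 0.
Proof.
  intros Hq.
  pose proof (logmeanexp_gap_chord_lt lam q lam_neg q (1 - q) ltac:(lra) ltac:(lra) ltac:(lra)) as C.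
  unfold logmeanexp_gap in C.
  replace (q + q) with (2 * q) in C by ring. replace (q - q) with 0 in C by ring.
  replace (q + (1 - q)) with 1 in C by ring. replace (q - (1 - q)) with (2 * q - 1) in C by ring.
  rewrite logmeanexp_0 in C. unfold mean_defect. lra.
Qed.

Lemma mean_defect_sign q : q < 0 \/ 1/2 <= q -> 0 <= q * (1 - q) * mean_defect lam q.
Proof.
  intros Hq.
  destruct (Rlt_or_le q 0) as [Hn|Hn]; [|destruct (Rlt_or_le q 1) as [H1|H1]].
  - pose proof (mean_defect_nonpos_neg q Hn).
    replace (q * (1 - q) * _) with ((- q) * (1 - q) * (- mean_defect lam q)) by ring.
    apply Rmult_le_pos; [apply Rmult_le_pos|]; lra.
  - pose proof (mean_defect_nonneg q ltac:(lra)).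
    apply Rmult_le_pos; [apply Rmult_le_pos|]; lra.
  - destruct (Req_dec q 1) as [->|N1]; [ring_simplify; lra|].
    pose proof (mean_defect_nonpos_gt1 q ltac:(lra)).
    replace (q * (1 - q) * _) with (q * (q - 1) * (- mean_defect lam q)) by ring.
    apply Rmult_le_pos; [apply Rmult_le_pos|]; lra.
Qed.

Lemma logmeanexp_2_le : (1 + exp lam) * logmeanexp lam 2 <= 2 * lam * exp lam.
Proof.
  pose proof (logmeanexp_gap_le lam 1 lam_neg 1 ltac:(lra) ltac:(lra)) as C.
  unfold logmeanexp_gap, sigmoid in C.
  replace (1 + 1) with 2 in C by ring. replace (1 - 1) with 0 in C by ring.
  replace (1 + 0) with 1 in C by ring. replace (1 - 0) with 1 in C by ring.
  rewrite logmeanexp_0, !Rmult_1_l, Rminus_0_r in C.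
  pose proof (exp_pos lam).
  apply (Rmult_le_compat_r (1 + exp lam)) in C; [|lra].
  replace (lam * (exp lam / (1 + exp lam) + exp lam / (1 + exp lam)) * (1 + exp lam))
    with (2 * lam * exp lam) in C by (field; lra). lra.
Qed.

End MeanDefect.

Lemma rpow_0 q : rpow 0 q = 0.
Proof. unfold rpow. destruct (Req_EM_T 0 0); [auto|lra]. Qed.

Lemma rpow_pos x q : 0 < x -> rpow x q = exp (q * ln x).
Proof. intros. unfold rpow. destruct (Req_EM_T x 0); [lra|reflexivity]. Qed.

Lemma rpow_1 q : rpow 1 q = 1.
Proof. rewrite rpow_pos, ln_1, Rmult_0_r, exp_0 by lra. reflexivity. Qed.

Lemma rpow_ge0 x q : 0 <= rpow x q.
Proof. unfold rpow. destruct (Req_EM_T x 0); [lra|]. left; apply exp_pos. Qed.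

Lemma xlnx_pos x : 0 < x -> xlnx x = x * ln x.
Proof. intros. unfold xlnx. destruct (Req_EM_T x 0); [lra|reflexivity]. Qed.

Lemma powmean_pos q x y : q <> 0 -> 0 < x -> 0 < y ->
  powmean q x y = exp (/ q * ln ((exp (q * ln x) + exp (q * ln y)) / 2)).
Proof.
  intros Hq Hx Hy. pose proof (exp_pos (q * ln x)). pose proof (exp_pos (q * ln y)).
  unfold powmean. destruct (Req_EM_T q 0); [lra|]. destruct (Rlt_dec q 0).
  - destruct (Req_EM_T x 0); [lra|]. destruct (Req_EM_T y 0); [lra|]. reflexivity.
  - rewrite (rpow_pos x), (rpow_pos y), rpow_pos; auto. lra.
Qed.

Lemma powmean_1_l x : 0 <= x -> powmean 1 x 1 = (x + 1) / 2.
Proof.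
  intros Hx. unfold powmean. destruct (Req_EM_T 1 0); [lra|]. destruct (Rlt_dec 1 0); [lra|].
  rewrite rpow_1, Rinv_1. destruct (Req_dec x 0) as [->|Nx].
  - rewrite rpow_0, rpow_pos, Rmult_1_l, exp_ln; lra.
  - rewrite (rpow_pos x), !Rmult_1_l, exp_ln, rpow_pos, Rmult_1_l, exp_ln; lra.
Qed.

Lemma powmean_pos_exponent q x : 0 < q -> 0 <= x ->
  powmean q x 1 = exp (/ q * ln ((rpow x q + 1) / 2)).
Proof.
  intros Hq Hx. unfold powmean. destruct (Req_EM_T q 0); [lra|]. destruct (Rlt_dec q 0); [lra|].
  rewrite rpow_1. pose proof (rpow_ge0 x q). rewrite rpow_pos by lra. reflexivity.
Qed.

Lemma powmean_comm q x y : powmean q x y = powmean q y x.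
Proof.
  unfold powmean. destruct (Req_EM_T q 0); [rewrite Rmult_comm; reflexivity|].
  destruct (Rlt_dec q 0); [|rewrite Rplus_comm; reflexivity].
  destruct (Req_EM_T x 0); destruct (Req_EM_T y 0); try reflexivity.
  rewrite Rplus_comm; reflexivity.
Qed.

Lemma exp_mean_scale q y C : q <> 0 -> 0 < y -> 0 < C ->
  exp (/ q * ln (exp (q * ln y) * C)) = y * exp (/ q * ln C).
Proof.
  intros Hq Hy HC. rewrite ln_mult, ln_exp by (apply exp_pos || lra).
  replace (/ q * (q * ln y + ln C)) with (ln y + / q * ln C) by (field; auto).
  rewrite exp_plus, exp_ln; auto.
Qed.

Lemma powmean_hom q x y : 0 <= x -> 0 < y -> powmean q x y = y * powmean q (x / y) 1.
Proof.
  intros Hx Hy. destruct (Req_dec q 0) as [->|Hq].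
  { unfold powmean. destruct (Req_EM_T 0 0); [|lra].
    replace (x * y) with ((y * y) * (x / y)) by (field; lra).
    assert (0 <= x / y) by (apply Rdiv_le_0_compat; lra).
    rewrite Rmult_1_r, sqrt_mult, sqrt_square by nra. reflexivity. }
  destruct (Req_dec x 0) as [->|Nx].
  - replace (0 / y) with 0 by (field; lra). unfold powmean.
    destruct (Req_EM_T q 0); [lra|]. destruct (Rlt_dec q 0).
    + destruct (Req_EM_T 0 0); [ring|lra].
    + pose proof (exp_pos (q * ln y)).
      rewrite rpow_0, rpow_1, (rpow_pos y), !rpow_pos by lra.
      replace ((0 + exp (q * ln y)) / 2) with (exp (q * ln y) * ((0 + 1) / 2)) by field.
      apply exp_mean_scale; auto; lra.
  - assert (0 < x / y) by (apply Rdiv_lt_0_compat; lra).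
    rewrite !powmean_pos, ln_1, Rmult_0_r, exp_0 by lra.
    replace ((exp (q * ln x) + exp (q * ln y)) / 2) with (exp (q * ln y) * ((exp (q * ln (x / y)) + 1) / 2)).
    + apply exp_mean_scale; auto. pose proof (exp_pos (q * ln (x / y))). lra.
    + rewrite ln_div by lra. replace (q * (ln x - ln y)) with (q * ln x + - (q * ln y)) by ring.
      rewrite exp_plus, exp_Ropp. pose proof (exp_pos (q * ln y)). field. lra.
Qed.

Lemma powmean_0_0 q : powmean q 0 0 = 0.
Proof.
  unfold powmean. destruct (Req_EM_T q 0); [rewrite Rmult_0_l; apply sqrt_0|].
  destruct (Rlt_dec q 0); [destruct (Req_EM_T 0 0); [auto|lra]|].
  rewrite rpow_0. replace ((0 + 0) / 2) with 0 by field. apply rpow_0.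
Qed.

Lemma powmean_1_1 q : powmean q 1 1 = 1.
Proof.
  destruct (Req_dec q 0) as [->|Hq].
  - unfold powmean. destruct (Req_EM_T 0 0); [|lra]. rewrite Rmult_1_l; apply sqrt_1.
  - rewrite powmean_pos, ln_1, Rmult_0_r, exp_0 by lra. replace ((1 + 1) / 2) with 1 by field.
    rewrite ln_1, Rmult_0_r, exp_0; auto.
Qed.

Lemma Hp_sym p x y : Hp p x y = Hp p y x.
Proof.
  unfold Hp. destruct (Req_EM_T p 0).
  - rewrite (Rplus_comm y x). destruct (Req_EM_T (x + y) 0); ring.
  - rewrite (powmean_comm 1 x y), (powmean_comm (1 - p) x y). reflexivity.
Qed.

Lemma Hp_hom p x y : 0 <= x -> 0 < y -> Hp p x y = y * Hp p (x / y) 1.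
Proof.
  intros Hx Hy. unfold Hp. destruct (Req_EM_T p 0).
  2: rewrite (powmean_hom 1 x y), (powmean_hom (1 - p) x y) by auto; ring.
  assert (0 <= x / y) by (apply Rdiv_le_0_compat; lra).
  destruct (Req_EM_T (x + y) 0); [lra|]. destruct (Req_EM_T (x / y + 1) 0); [lra|].
  unfold xlnx. destruct (Req_EM_T y 0); [lra|]. destruct (Req_EM_T 1 0); [lra|].
  rewrite ln_1, Rmult_0_r.
  replace ((x / y + 1) / 2) with (((x + y) / 2) / y) by (field; lra).
  rewrite (ln_div ((x + y) / 2) y) by lra.
  destruct (Req_EM_T x 0) as [->|Nx].
  - replace (0 / y) with 0 by (field; lra). destruct (Req_EM_T 0 0); [ring|lra].
  - destruct (Req_EM_T (x / y) 0) as [Exy|Nxy].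
    { exfalso. apply Nx. replace x with (x / y * y) by (field; lra). rewrite Exy. ring. }
    rewrite (ln_div x y) by lra. field. lra.
Qed.

Lemma Hp_0_0 p : Hp p 0 0 = 0.
Proof.
  unfold Hp. destruct (Req_EM_T p 0); [|rewrite !powmean_0_0; ring].
  unfold xlnx. destruct (Req_EM_T 0 0); [|lra]. destruct (Req_EM_T (0 + 0) 0); [ring|lra].
Qed.

Lemma Hp_1_1 p : Hp p 1 1 = 0.
Proof.
  unfold Hp. destruct (Req_EM_T p 0); [|rewrite !powmean_1_1; ring].
  unfold xlnx. destruct (Req_EM_T 1 0); [lra|]. destruct (Req_EM_T (1 + 1) 0); [lra|].
  replace ((1 + 1) / 2) with 1 by field. rewrite ln_1. ring.
Qed.

Lemma Hp_0_eq t : Hp 0 t 1 = xlnx t - (t + 1) * ln ((t + 1) / 2).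
Proof.
  unfold Hp. destruct (Req_EM_T 0 0); [|lra].
  unfold xlnx at 2. destruct (Req_EM_T 1 0); [lra|]. rewrite ln_1, Rmult_0_r.
  destruct (Req_EM_T (t + 1) 0) as [E|]; [rewrite E|]; ring.
Qed.

(* For [p >= 1] the mean [M_{1-p}(0,1)] vanishes (by convention when [1 - p < 0]). *)
Lemma Hp_0_1_ge1 p : 1 <= p -> Hp p 0 1 = 1 / p.
Proof.
  intros Hp1. unfold Hp. destruct (Req_EM_T p 0); [lra|].
  rewrite powmean_1_l by lra. unfold powmean. destruct (Req_EM_T (1 - p) 0).
  - rewrite Rmult_0_l, sqrt_0. field. lra.
  - destruct (Rlt_dec (1 - p) 0); [|lra]. destruct (Req_EM_T 0 0); [|lra]. field. lra.
Qed.

Lemma Hp_0_1_pos p : 0 < Hp p 0 1.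
Proof.
  destruct (Rle_or_lt 1 p) as [Hp1|Hp1].
  { rewrite Hp_0_1_ge1 by auto. apply Rdiv_lt_0_compat; lra. }
  assert (Hl : ln (1 / 2) < 0) by (rewrite <- ln_1; apply ln_increasing; lra).
  destruct (Req_dec p 0) as [->|Hp0].
  { rewrite Hp_0_eq. unfold xlnx. destruct (Req_EM_T 0 0); [|lra].
    replace ((0 + 1) / 2) with (1 / 2) by field. lra. }
  unfold Hp. destruct (Req_EM_T p 0); [lra|].
  rewrite powmean_1_l, powmean_pos_exponent, rpow_0 by lra.
  replace ((0 + 1) / 2) with (1 / 2) by field.
  assert (E : exp (ln (1 / 2)) = 1 / 2) by (apply exp_ln; lra).
  destruct (Rlt_or_le 0 p) as [Hpos|Hneg].
  - (* [M_q(0,1) = (1/2)^{1/q} < 1/2] since [1/q > 1]. *)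
    assert (1 < / (1 - p)) by (apply (Rmult_lt_reg_l (1 - p)); [|rewrite Rinv_r]; lra).
    assert (exp (/ (1 - p) * ln (1 / 2)) < 1 / 2) by (rewrite <- E at 2; apply exp_increasing; nra).
    assert (0 < 2 / p) by (apply Rdiv_lt_0_compat; lra). nra.
  - assert (0 < / (1 - p) < 1).
    { split; [apply Rinv_0_lt_compat; lra|]. apply (Rmult_lt_reg_l (1 - p)); [|rewrite Rinv_r]; lra. }
    assert (1 / 2 < exp (/ (1 - p) * ln (1 / 2))) by (rewrite <- E at 1; apply exp_increasing; nra).
    assert (2 / p < 0) by (unfold Rdiv; assert (/ p < 0) by (apply Rinv_lt_0_compat; lra); nra). nra.
Qed.

Lemma Hp_1_sq s : 0 <= s -> Hp 1 (s * s) 1 = (1 - s) * (1 - s).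
Proof.
  intros Hs. unfold Hp. destruct (Req_EM_T 1 0); [lra|].
  rewrite powmean_1_l by nra. replace (1 - 1) with 0 by ring. unfold powmean.
  destruct (Req_EM_T 0 0); [|lra]. rewrite Rmult_1_r, sqrt_square by auto. field.
Qed.

(** * The profile [s ↦ H_p(s², 1)] *)

Lemma exp_sub_sign c a x : 0 <= c * x -> 0 <= c * (exp a - exp (a - x)).
Proof.
  intros Hcx. destruct (Rtotal_order x 0) as [Hx|[->|Hx]].
  - assert (exp a < exp (a - x)) by (apply exp_increasing; lra). nra.
  - rewrite Rminus_0_r. lra.
  - assert (exp (a - x) < exp a) by (apply exp_increasing; lra). nra.
Qed.

Lemma exp_sub_sign_lt c a x : c * x < 0 -> c * (exp a - exp (a - x)) < 0.
Proof.
  intros Hcx. destruct (Rtotal_order x 0) as [Hx|[->|Hx]].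
  - assert (exp a < exp (a - x)) by (apply exp_increasing; lra). nra.
  - lra.
  - assert (exp (a - x) < exp a) by (apply exp_increasing; lra). nra.
Qed.

(* [powmean_sq q s = M_q(s², 1)] for [s > 0], in a form suited to differentiation. *)
Definition powmean_sq (q s : R) : R := exp (/ q * ln ((exp (q * ln (s * s)) + 1) / 2)).
Definition Gp (p s : R) : R := 2 / p * ((s * s + 1) / 2 - powmean_sq (1 - p) s).
Definition dGp (p s : R) : R :=
  2 / p * (s - powmean_sq (1 - p) s * exp ((1 - p) * ln (s * s)) /
                 ((exp ((1 - p) * ln (s * s)) + 1) / 2 * s)).

Lemma Hp_sq_eq_Gp p s : p <> 0 -> p <> 1 -> 0 < s -> Hp p (s * s) 1 = Gp p s.
Proof.
  intros Hp0 Hp1 Hs. unfold Hp. destruct (Req_EM_T p 0); [lra|].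
  rewrite powmean_1_l, powmean_pos, ln_1, Rmult_0_r, exp_0 by nra. reflexivity.
Qed.

Lemma is_derive_Gp p s : p <> 0 -> p <> 1 -> 0 < s -> is_derive (Gp p) s (dGp p s).
Proof.
  intros Hp0 Hp1 Hs. unfold Gp, dGp, powmean_sq.
  assert (0 < s * s) by nra. pose proof (exp_pos ((1 - p) * ln (s * s))).
  auto_derive.
  - repeat split; lra.
  - unfold Rdiv. field. repeat split; lra.
Qed.

Section LogForm.

Variables p s : R.
Hypothesis p_neq0 : p <> 0.
Hypothesis p_neq1 : p <> 1.
Hypothesis s_pos : 0 < s.
Let q := 1 - p.
Let L := logmeanexp (ln s).

Lemma exp_mul_ln_sq : exp (q * ln (s * s)) = exp ((2 * q) * ln s).
Proof. rewrite ln_mult by lra. f_equal. ring. Qed.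

Lemma powmean_sq_eq : powmean_sq q s = exp (/ q * L (2 * q)).
Proof.
  unfold powmean_sq, L, logmeanexp. rewrite exp_mul_ln_sq, (Rplus_comm (exp _) 1). reflexivity.
Qed.

Lemma Gp_slope_numerator : dGp p s * (1 - s) + 2 * Gp p s =
  4 / p * (exp (L 1) - exp (L 1 - mean_defect (ln s) q / q)).
Proof.
  assert (Hq : q <> 0) by (unfold q; lra).
  assert (Es : exp (ln s) = s) by (apply exp_ln; auto).
  assert (HX : 0 < exp ((2 * q) * ln s)) by apply exp_pos.
  assert (E1 : exp (L 1) = (1 + s) / 2) by (unfold L; rewrite exp_logmeanexp, Rmult_1_l, Es; auto).
  assert (E2 : exp (L (2 * q - 1)) = (1 + exp ((2 * q) * ln s) / s) / 2).
  { unfold L. rewrite exp_logmeanexp.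
    replace ((2 * q - 1) * ln s) with ((2 * q) * ln s + - ln s) by ring.
    rewrite exp_plus, exp_Ropp, Es. field. lra. }
  assert (E3 : exp (L (2 * q)) = (exp ((2 * q) * ln s) + 1) / 2)
    by (unfold L; rewrite exp_logmeanexp; lra).
  replace (L 1 - mean_defect (ln s) q / q) with (L (2 * q - 1) + / q * L (2 * q) + - L (2 * q))
    by (unfold mean_defect, L; field; auto).
  rewrite !exp_plus, exp_Ropp, E1, E2, E3, <- powmean_sq_eq.
  unfold dGp, Gp. fold q. rewrite exp_mul_ln_sq.
  replace (1 - q) with p by (unfold q; ring). field. repeat split; lra.
Qed.

Lemma dGp_eq : dGp p s = 2 / p * (s - s * exp (p * (/ q * L (2 * q) - 2 * ln s))).
Proof.
  assert (Hq : q <> 0) by (unfold q; lra).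
  assert (Es : exp (ln s) = s) by (apply exp_ln; auto).
  assert (HX : 0 < exp ((2 * q) * ln s)) by apply exp_pos.
  assert (E3 : exp (L (2 * q)) = (exp ((2 * q) * ln s) + 1) / 2)
    by (unfold L; rewrite exp_logmeanexp; lra).
  replace (p * (/ q * L (2 * q) - 2 * ln s))
    with (/ q * L (2 * q) + - L (2 * q) + (2 * q) * ln s + - ln s + - ln s) by (unfold q; field; auto).
  rewrite !exp_plus, !exp_Ropp, E3, <- powmean_sq_eq, Es.
  unfold dGp. fold q. rewrite exp_mul_ln_sq. field. repeat split; lra.
Qed.

End LogForm.

(* [M_q(s², 1) >= s²], in logarithmic form. *)
Lemma ln_sq_le_logmeanexp q s : q <> 0 -> 0 < s < 1 -> 2 * ln s <= / q * logmeanexp (ln s) (2 * q).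
Proof.
  intros Hq Hs. assert (Hl : ln s < 0) by (rewrite <- ln_1; apply ln_increasing; lra).
  unfold logmeanexp. set (X := exp (2 * q * ln s)). assert (HX : 0 < X) by apply exp_pos.
  assert (EX : ln X = q * (2 * ln s)) by (unfold X; rewrite ln_exp; ring).
  destruct (Rlt_or_le 0 q) as [Hq0|Hq0].
  - assert (X <= 1) by (unfold X; rewrite <- exp_0; apply exp_le; nra).
    assert (ln X <= ln ((1 + X) / 2)) by (apply ln_le; lra).
    apply (Rmult_le_reg_l q); auto.
    replace (q * (/ q * ln ((1 + X) / 2))) with (ln ((1 + X) / 2)) by (field; lra). lra.
  - assert (1 <= X) by (unfold X; rewrite <- exp_0; apply exp_le; nra).
    assert (ln ((1 + X) / 2) <= ln X) by (apply ln_le; lra).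
    apply (Rmult_le_reg_l (- q)); [lra|].
    replace (- q * (/ q * ln ((1 + X) / 2))) with (- ln ((1 + X) / 2)) by (field; lra). nra.
Qed.

Lemma dGp_nonpos p s : p <> 0 -> p <> 1 -> 0 < s < 1 -> dGp p s <= 0.
Proof.
  intros Hp0 Hp1 Hs. rewrite dGp_eq by (auto; lra).
  pose proof (ln_sq_le_logmeanexp (1 - p) s ltac:(lra) Hs).
  set (Y := / (1 - p) * logmeanexp (ln s) (2 * (1 - p)) - 2 * ln s).
  assert (HY : 0 <= Y) by (unfold Y; lra).
  destruct (Rlt_or_le 0 p) as [Hpos|Hneg].
  - assert (1 <= exp (p * Y)) by (rewrite <- exp_0; apply exp_le; nra).
    assert (0 < 2 / p) by (apply Rdiv_lt_0_compat; lra).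
    assert (s - s * exp (p * Y) <= 0) by nra. nra.
  - assert (exp (p * Y) <= 1) by (rewrite <- exp_0; apply exp_le; nra).
    assert (2 / p < 0) by (unfold Rdiv; assert (/ p < 0) by (apply Rinv_lt_0_compat; lra); nra).
    assert (0 <= s - s * exp (p * Y)) by nra. nra.
Qed.

Lemma Gp_slope_numerator_nonneg p s : p <> 0 -> p <= 1/2 \/ 1 < p -> 0 < s < 1 ->
  0 <= dGp p s * (1 - s) + 2 * Gp p s.
Proof.
  intros Hp0 Hp Hs. rewrite Gp_slope_numerator by lra. apply exp_sub_sign.
  assert (Hl : ln s < 0) by (rewrite <- ln_1; apply ln_increasing; lra).
  pose proof (mean_defect_sign (ln s) Hl (1 - p) ltac:(lra)).
  replace (4 / p * (mean_defect (ln s) (1 - p) / (1 - p)))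
    with (4 * ((1 - p) * (1 - (1 - p)) * mean_defect (ln s) (1 - p)) / ((p * (1 - p)) * (p * (1 - p))))
    by (field; lra).
  apply Rdiv_le_0_compat; [lra|]. assert (p * (1 - p) <> 0) by (apply Rmult_integral_contrapositive; lra). nra.
Qed.

Lemma Gp_slope_numerator_neg p s : 1/2 < p < 1 -> 0 < s < 1 -> dGp p s * (1 - s) + 2 * Gp p s < 0.
Proof.
  intros Hp Hs. rewrite Gp_slope_numerator by lra. apply exp_sub_sign_lt.
  assert (Hl : ln s < 0) by (rewrite <- ln_1; apply ln_increasing; lra).
  pose proof (mean_defect_neg (ln s) Hl (1 - p) ltac:(lra)).
  assert (0 < 4 / p) by (apply Rdiv_lt_0_compat; lra).
  assert (mean_defect (ln s) (1 - p) / (1 - p) < 0) by (apply Rdiv_neg_pos; lra). nra.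
Qed.

Definition G0 (s : R) : R := s * s * ln (s * s) - (s * s + 1) * ln ((s * s + 1) / 2).
Definition dG0 (s : R) : R := 2 * s * (ln (s * s) - ln ((s * s + 1) / 2)).

Lemma Hp_0_sq_eq_G0 s : 0 < s -> Hp 0 (s * s) 1 = G0 s.
Proof. intros. rewrite Hp_0_eq, xlnx_pos by nra. reflexivity. Qed.

Lemma is_derive_G0 s : 0 < s -> is_derive G0 s (dG0 s).
Proof.
  intros Hs. unfold G0, dG0. assert (0 < s * s) by nra.
  auto_derive; [repeat split; lra|]. unfold Rdiv. field. repeat split; lra.
Qed.

Lemma G0_slope_numerator_nonneg s : 0 < s < 1 -> 0 <= dG0 s * (1 - s) + 2 * G0 s.
Proof.
  intros Hs. assert (Hl : ln s < 0) by (rewrite <- ln_1; apply ln_increasing; lra).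
  pose proof (logmeanexp_2_le (ln s) Hl) as C.
  unfold logmeanexp in C. rewrite exp_ln in C by lra.
  replace (2 * ln s) with (ln (s * s)) in C by (rewrite ln_mult; lra).
  rewrite exp_ln in C by nra.
  unfold dG0, G0. rewrite ln_mult by lra. rewrite ln_mult in C by lra.
  replace ((1 + s * s) / 2) with ((s * s + 1) / 2) in C by lra. nra.
Qed.

Lemma dG0_nonpos s : 0 < s < 1 -> dG0 s <= 0.
Proof.
  intros Hs. unfold dG0. assert (ln (s * s) <= ln ((s * s + 1) / 2)) by (apply ln_le; nra). nra.
Qed.

(* From [ln y <= y - 1] at [y = 1/|s|]. *)
Lemma xlnx_sq_bound s : Rabs s < 1 -> Rabs (xlnx (s * s)) <= 2 * Rabs s.
Proof.
  intros Hs. destruct (Req_dec s 0) as [->|Ns].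
  { rewrite Rmult_0_l. unfold xlnx. destruct (Req_EM_T 0 0); [|lra]. rewrite !Rabs_R0. lra. }
  set (a := Rabs s) in *. assert (Ha : 0 < a) by (apply Rabs_pos_lt; auto).
  assert (E : s * s = a * a) by (unfold a; rewrite <- Rabs_mult; symmetry; apply Rabs_pos_eq; nra).
  rewrite xlnx_pos, E, ln_mult by nra.
  assert (ln a < 0) by (rewrite <- ln_1; apply ln_increasing; lra).
  assert (Hinv : ln (/ a) <= / a - 1).
  { pose proof (exp_ineq1_le (ln (/ a))). rewrite exp_ln in H0 by (apply Rinv_0_lt_compat; lra). lra. }
  rewrite ln_Rinv in Hinv by lra.
  assert (a - 1 <= a * ln a).
  { apply (Rmult_le_reg_r (/ a)); [apply Rinv_0_lt_compat; lra|].
    replace (a * ln a * / a) with (ln a) by (field; lra).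
    replace ((a - 1) * / a) with (1 - / a) by (field; lra). lra. }
  rewrite Rabs_left1 by nra. nra.
Qed.

Lemma continuity_pt_xlnx_sq : continuity_pt (fun s => xlnx (s * s)) 0.
Proof.
  intros eps Heps. exists (Rmin 1 (eps / 2)). split; [apply Rmin_pos; lra|].
  intros s [_ Hs]. simpl in *. unfold R_dist in *. rewrite Rminus_0_r in Hs.
  rewrite Rmult_0_l. unfold xlnx at 2. destruct (Req_EM_T 0 0); [|lra]. rewrite Rminus_0_r.
  pose proof (Rmin_l 1 (eps / 2)). pose proof (Rmin_r 1 (eps / 2)).
  pose proof (xlnx_sq_bound s ltac:(lra)). lra.
Qed.

Lemma continuity_pt_rpow_sq q : 0 < q -> continuity_pt (fun s => rpow (s * s) q) 0.
Proof.
  intros Hq eps Heps. exists (exp (ln eps / (2 * q))). split; [apply exp_pos|].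
  intros s [_ Hs]. simpl in *. unfold R_dist in *. rewrite Rmult_0_l, rpow_0, Rminus_0_r.
  rewrite Rminus_0_r in Hs.
  destruct (Req_dec s 0) as [->|Ns]. { rewrite Rmult_0_l, rpow_0, Rabs_R0; auto. }
  assert (Ha : 0 < Rabs s) by (apply Rabs_pos_lt; auto).
  rewrite rpow_pos, Rabs_pos_eq by (nra || (left; apply exp_pos)).
  assert (Hln : ln (Rabs s) < ln eps / (2 * q)).
  { rewrite <- (ln_exp (ln eps / (2 * q))). apply ln_increasing; auto. }
  replace (s * s) with (Rabs s * Rabs s) by (rewrite <- Rabs_mult; apply Rabs_pos_eq; nra).
  rewrite ln_mult, <- (exp_ln eps) by auto. apply exp_increasing.
  replace (ln eps) with (q * (2 * (ln eps / (2 * q)))) by (field; lra). nra.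
Qed.

Lemma continuity_pt_Hp_sq p : p < 1 -> continuity_pt (fun s => Hp p (s * s) 1) 0.
Proof.
  intros Hp1. destruct (Req_dec p 0) as [->|Hp0].
  - eapply continuity_pt_ext. { intros s. symmetry. apply Hp_0_eq. }
    apply continuity_pt_minus; [apply continuity_pt_xlnx_sq|].
    apply (continuity_pt_is_derive _ _ 0). auto_derive; [lra|]. unfold Rdiv. ring.
  - set (W u := exp (/ (1 - p) * ln ((u + 1) / 2))).
    assert (CW : continuity_pt W (rpow (0 * 0) (1 - p))).
    { rewrite Rmult_0_l, rpow_0. apply (continuity_pt_is_derive W 0 (/ (1 - p) * ((1 / 2) / ((0 + 1) / 2)) * W 0)).
      unfold W. auto_derive; [lra|]. unfold Rdiv. field. lra. }
    pose proof (continuity_pt_comp _ _ 0 (continuity_pt_rpow_sq (1 - p) ltac:(lra)) CW) as C.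
    apply (continuity_pt_ext (fun s => 2 / p * ((s * s + 1) / 2 - W (rpow (s * s) (1 - p))))).
    { intros s. unfold Hp. destruct (Req_EM_T p 0); [lra|].
      assert (0 <= s * s) by nra. rewrite powmean_1_l, powmean_pos_exponent by lra. reflexivity. }
    apply continuity_pt_mult; [apply continuity_pt_const; intros ? ?; auto|].
    apply continuity_pt_minus; [|exact C].
    apply (continuity_pt_is_derive _ 0 0). auto_derive; auto. field.
Qed.

Section NegativeOrder.

Variables q s : R.
Hypothesis q_neg : q < 0.
Hypothesis s_pos : 0 < s.

Lemma powmean_sq_le : powmean_sq q s <= s.
Proof.
  assert (HY : 0 < exp (q * ln s)) by apply exp_pos.
  assert (EY : exp (q * ln (s * s)) = exp (q * ln s) * exp (q * ln s)).
  { rewrite <- exp_plus, ln_mult by lra. f_equal. ring. }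
  pose proof (pow2_ge_0 (exp (q * ln s) - 1)).
  assert (LY : ln (exp (q * ln s)) <= ln ((exp (q * ln s) * exp (q * ln s) + 1) / 2)) by (apply ln_le; nra).
  rewrite ln_exp in LY.
  assert (/ q < 0) by (apply Rinv_lt_0_compat; auto).
  unfold powmean_sq. rewrite EY.
  apply (Rle_trans _ (exp (ln s))); [apply exp_le|rewrite exp_ln; lra].
  replace (ln s) with (/ q * (q * ln s)) at 3 by (field; lra). nra.
Qed.

Lemma sq_le_powmean_sq : s <= 1 -> s * s <= powmean_sq q s.
Proof.
  intros Hs1. assert (Hln : ln (s * s) <= 0) by (rewrite <- ln_1; apply ln_le; nra).
  set (X := exp (q * ln (s * s))).
  assert (HX : 1 <= X) by (unfold X; rewrite <- exp_0; apply exp_le; nra).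
  assert (LX : ln ((X + 1) / 2) <= ln (exp (q * ln (s * s)))) by (apply ln_le; fold X; lra).
  rewrite ln_exp in LX.
  assert (/ q < 0) by (apply Rinv_lt_0_compat; auto).
  unfold powmean_sq. fold X.
  apply (Rle_trans _ (exp (ln (s * s)))); [rewrite exp_ln; nra|apply exp_le].
  replace (ln (s * s)) with (/ q * (q * ln (s * s))) at 1 by (field; lra). nra.
Qed.

End NegativeOrder.

(* For [p > 1] continuity of [s ↦ H_p(s², 1)] at [0] is not available, so the end point [0] is
   compared directly: [M_{1-p}(s², 1)] lies between [s²] and [s]. *)
Lemma hellinger_ratio_Hp_0_le p s : 1 < p -> 0 < s < 1 ->
  hellinger_ratio (Hp p) 0 <= hellinger_ratio (Hp p) s.
Proof.
  intros Hp1 Hs. unfold hellinger_ratio.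
  rewrite Rmult_0_l, Hp_0_1_ge1, Hp_sq_eq_Gp by lra. unfold Gp.
  pose proof (powmean_sq_le (1 - p) s ltac:(lra) ltac:(lra)).
  apply (Rmult_le_reg_l p); [lra|].
  replace (p * (1 / p / ((1 - 0) * (1 - 0)))) with 1 by (field; lra).
  replace (p * (2 / p * ((s * s + 1) / 2 - powmean_sq (1 - p) s) / ((1 - s) * (1 - s))))
    with ((s * s + 1 - 2 * powmean_sq (1 - p) s) / ((1 - s) * (1 - s))) by (field; lra).
  apply (Rmult_le_reg_r ((1 - s) * (1 - s))); [nra|].
  unfold Rdiv. rewrite Rmult_assoc, Rinv_l by nra. nra.
Qed.

Lemma Hp_sq_le_0 p s : 1 < p -> 0 < s <= 1 -> Hp p (s * s) 1 <= Hp p 0 1.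
Proof.
  intros Hp1 Hs. rewrite Hp_0_1_ge1, Hp_sq_eq_Gp by lra. unfold Gp.
  pose proof (sq_le_powmean_sq (1 - p) s ltac:(lra) ltac:(lra) ltac:(lra)).
  apply (Rmult_le_reg_l p); [lra|].
  replace (p * (1 / p)) with 1 by (field; lra).
  replace (p * (2 / p * ((s * s + 1) / 2 - powmean_sq (1 - p) s)))
    with (s * s + 1 - 2 * powmean_sq (1 - p) s) by (field; lra). nra.
Qed.

Lemma is_derive_div_one_sub_sq (G : R -> R) s dG : is_derive G s dG -> s <> 1 ->
  is_derive (fun t => G t / ((1 - t) * (1 - t))) s
    ((dG * (1 - s) + 2 * G s) / ((1 - s) * (1 - s) * (1 - s))).
Proof.
  intros HG Hs.
  assert (Hd : is_derive (fun t => (1 - t) * (1 - t)) s (- (2 * (1 - s)))) by (auto_derive; auto; ring).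
  pose proof (is_derive_div G (fun t => (1 - t) * (1 - t)) s dG _ HG Hd) as HQ.
  replace ((dG * (1 - s) + 2 * G s) / ((1 - s) * (1 - s) * (1 - s))) with
    ((dG * ((1 - s) * (1 - s)) - G s * (- (2 * (1 - s)))) / ((1 - s) * (1 - s)) ^ 2) by (field; lra).
  apply HQ. apply Rmult_integral_contrapositive; lra.
Qed.

Section Profile.

Variables (H : R -> R -> R) (G dG : R -> R).
Hypothesis H_sq_eq : forall t, 0 < t -> H (t * t) 1 = G t.
Hypothesis G_derive : forall t, 0 < t -> is_derive G t (dG t).

Lemma is_derive_H_sq s : 0 < s -> is_derive (fun t => H (t * t) 1) s (dG s).
Proof.
  intros Hs. apply (is_derive_ext_loc G); [|apply G_derive; auto].
  apply (filter_imp (fun t => 0 < t)); [|apply (open_gt 0 s Hs)].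
  intros t Ht. symmetry. apply H_sq_eq, Ht.
Qed.

Lemma is_derive_hellinger_ratio s : 0 < s < 1 ->
  is_derive (hellinger_ratio H) s ((dG s * (1 - s) + 2 * G s) / ((1 - s) * (1 - s) * (1 - s))).
Proof.
  intros Hs. apply (is_derive_ext_loc (fun t => G t / ((1 - t) * (1 - t)))).
  - apply (filter_imp (fun t => 0 < t)); [|apply (open_gt 0 s ltac:(lra))].
    intros t Ht. unfold hellinger_ratio. rewrite H_sq_eq; auto.
  - apply is_derive_div_one_sub_sq; [apply G_derive|]; lra.
Qed.

Lemma hellinger_ratio_mono s1 s2 :
  (forall t, 0 < t < 1 -> 0 <= dG t * (1 - t) + 2 * G t) ->
  0 < s1 \/ continuity_pt (fun t => H (t * t) 1) 0 ->
  0 <= s1 -> s1 <= s2 -> s2 < 1 -> hellinger_ratio H s1 <= hellinger_ratio H s2.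
Proof.
  intros Hslope Hs1 H1 H12 H2. destruct (Req_dec s1 s2) as [<-|N12]; [lra|].
  assert (Hcont : forall s, 0 < s < 1 -> continuity_pt (hellinger_ratio H) s)
    by (intros s Hs; eapply continuity_pt_is_derive, is_derive_hellinger_ratio, Hs).
  apply (nondecreasing_is_derive _ (fun s => (dG s * (1 - s) + 2 * G s) / ((1 - s) * (1 - s) * (1 - s)))
    s1 s2 H12).
  - intros x Hx. apply is_derive_hellinger_ratio. lra.
  - intros x Hx. apply Rdiv_le_0_compat; [apply Hslope; lra|].
    assert (0 < 1 - x) by lra. repeat apply Rmult_lt_0_compat; lra.
  - destruct (Req_dec s1 0) as [->|Ns1]; [|apply Hcont; lra].
    destruct Hs1 as [Hs1|C0]; [lra|]. apply continuity_pt_div; [exact C0| |lra].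
    apply (continuity_pt_is_derive _ _ (- (2 * (1 - 0)))). auto_derive; auto. ring.
  - apply Hcont; lra.
Qed.

Lemma H_sq_antitone s1 s2 :
  (forall t, 0 < t < 1 -> dG t <= 0) ->
  0 < s1 \/ continuity_pt (fun t => H (t * t) 1) 0 ->
  0 <= s1 -> s1 <= s2 -> s2 <= 1 -> H (s2 * s2) 1 <= H (s1 * s1) 1.
Proof.
  intros Hslope Hs1 H1 H12 H2. destruct (Req_dec s1 s2) as [<-|N12]; [lra|].
  assert (Hcont : forall s, 0 < s -> continuity_pt (fun t => H (t * t) 1) s)
    by (intros s Hs; eapply continuity_pt_is_derive, is_derive_H_sq, Hs).
  apply (nonincreasing_is_derive (fun t => H (t * t) 1) dG s1 s2 H12).
  - intros x Hx. apply is_derive_H_sq. lra.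
  - intros x Hx. apply Hslope. lra.
  - destruct (Req_dec s1 0) as [->|Ns1]; [|apply Hcont; lra].
    destruct Hs1 as [Hs1|C0]; [lra|exact C0].
  - apply Hcont; lra.
Qed.

End Profile.

Lemma hellinger_ratio_Hp_mono p s1 s2 : p <= 1/2 \/ 1 <= p ->
  0 <= s1 -> s1 <= s2 -> s2 < 1 -> hellinger_ratio (Hp p) s1 <= hellinger_ratio (Hp p) s2.
Proof.
  intros Hrange H1 H12 H2.
  destruct (Req_dec p 1) as [->|Np1].
  { unfold hellinger_ratio. rewrite !Hp_1_sq by lra.
    rewrite !Rdiv_diag by (apply Rmult_integral_contrapositive; lra). lra. }
  destruct (Req_dec p 0) as [->|Np0].
  { apply (hellinger_ratio_mono _ G0 dG0 Hp_0_sq_eq_G0 is_derive_G0); auto.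
    - apply G0_slope_numerator_nonneg.
    - right. apply continuity_pt_Hp_sq. lra. }
  assert (Hmono : 0 < s1 \/ continuity_pt (fun t => Hp p (t * t) 1) 0 ->
    hellinger_ratio (Hp p) s1 <= hellinger_ratio (Hp p) s2).
  { intros Hs1. apply (hellinger_ratio_mono _ (Gp p) (dGp p)); auto.
    - intros t Ht. apply Hp_sq_eq_Gp; auto.
    - intros t Ht. apply is_derive_Gp; auto.
    - intros t Ht. apply Gp_slope_numerator_nonneg; auto. lra. }
  destruct (Rlt_or_le 1 p) as [Hgt|Hle]; [|apply Hmono; right; apply continuity_pt_Hp_sq; lra].
  destruct (Req_dec s1 0) as [->|Ns1]; [|apply Hmono; left; lra].
  destruct (Req_dec s2 0) as [->|Ns2]; [lra|]. apply hellinger_ratio_Hp_0_le; lra.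
Qed.

Lemma Hp_sq_antitone p s1 s2 : 0 <= s1 -> s1 <= s2 -> s2 <= 1 -> Hp p (s2 * s2) 1 <= Hp p (s1 * s1) 1.
Proof.
  intros H1 H12 H2.
  destruct (Req_dec p 1) as [->|Np1]; [rewrite !Hp_1_sq by lra; nra|].
  destruct (Req_dec p 0) as [->|Np0].
  { apply (H_sq_antitone _ G0 dG0 Hp_0_sq_eq_G0 is_derive_G0); auto.
    - apply dG0_nonpos.
    - right. apply continuity_pt_Hp_sq. lra. }
  assert (Hanti : 0 < s1 \/ continuity_pt (fun t => Hp p (t * t) 1) 0 ->
    Hp p (s2 * s2) 1 <= Hp p (s1 * s1) 1).
  { intros Hs1. apply (H_sq_antitone _ (Gp p) (dGp p)); auto.
    - intros t Ht. apply Hp_sq_eq_Gp; auto.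
    - intros t Ht. apply is_derive_Gp; auto.
    - intros t Ht. apply dGp_nonpos; auto. }
  destruct (Rlt_or_le 1 p) as [Hgt|Hle]; [|apply Hanti; right; apply continuity_pt_Hp_sq; lra].
  destruct (Req_dec s1 0) as [->|Ns1]; [|apply Hanti; left; lra].
  destruct (Req_dec s2 0) as [->|Ns2]; [lra|].
  rewrite Rmult_0_l. apply Hp_sq_le_0; lra.
Qed.

Lemma Hp_antitone p t1 t2 : 0 <= t1 -> t1 <= t2 -> t2 <= 1 -> Hp p t2 1 <= Hp p t1 1.
Proof.
  intros H1 H12 H2. rewrite <- (sqrt_sqrt t1), <- (sqrt_sqrt t2) by lra.
  apply Hp_sq_antitone.
  - apply sqrt_pos.
  - apply sqrt_le_1_alt; auto.
  - rewrite <- sqrt_1. apply sqrt_le_1_alt; auto.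
Qed.

Lemma sqrt_Hp_metric p : p <= 1/2 \/ 1 <= p -> is_metric_on_nonneg (fun r t => sqrt (Hp p r t)).
Proof.
  intros Hrange. apply sqrt_metric_of_hellinger_ratio.
  - apply Hp_sym.
  - apply Hp_hom.
  - apply Hp_0_0.
  - apply Hp_1_1.
  - apply Hp_0_1_pos.
  - intros s1 s2. apply hellinger_ratio_Hp_mono, Hrange.
  - apply Hp_antitone.
Qed.

Lemma hellinger_ratio_Hp_decreasing p s1 s2 : 1/2 < p < 1 -> 0 < s1 -> s1 < s2 -> s2 < 1 ->
  hellinger_ratio (Hp p) s2 < hellinger_ratio (Hp p) s1.
Proof.
  intros Hrange H1 H12 H2.
  enough (- hellinger_ratio (Hp p) s1 < - hellinger_ratio (Hp p) s2) by lra.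
  apply (incr_function (fun s => - hellinger_ratio (Hp p) s) 0 1
    (fun s => - ((dGp p s * (1 - s) + 2 * Gp p s) / ((1 - s) * (1 - s) * (1 - s))))); simpl; auto.
  - intros x Hx0 Hx1. apply (is_derive_opp (hellinger_ratio (Hp p))).
    apply (is_derive_hellinger_ratio _ (Gp p) (dGp p)); [| |lra].
    + intros t Ht. apply Hp_sq_eq_Gp; auto; lra.
    + intros t Ht. apply is_derive_Gp; auto; lra.
  - intros x Hx0 Hx1. apply Ropp_gt_lt_0_contravar, Rdiv_neg_pos.
    + apply Gp_slope_numerator_neg; lra.
    + assert (0 < 1 - x) by lra. repeat apply Rmult_lt_0_compat; lra.
Qed.

(* [√H_p(1/16, 1) > √H_p(1/16, 1/4) + √H_p(1/4, 1)], since in the Hellinger factorization the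
   outer pair carries the ratio at [1/4] and both inner pairs the smaller ratio at [1/2]. *)
Lemma sqrt_Hp_not_triangle p : 1/2 < p < 1 -> ~ triangle_on_nonneg (fun r t => sqrt (Hp p r t)).
Proof.
  intros Hrange T.
  specialize (T (1/16) (1/4) 1 ltac:(lra) ltac:(lra) ltac:(lra)). simpl in T.
  set (r1 := hellinger_ratio (Hp p) (1/4)). set (r2 := hellinger_ratio (Hp p) (1/2)).
  assert (Hr : r2 < r1) by (apply hellinger_ratio_Hp_decreasing; lra).
  assert (E1 : Hp p (1/16) 1 = r1 * (9/16)).
  { unfold r1, hellinger_ratio. replace (1/4 * (1/4)) with (1/16) by field. field. }
  assert (E2 : Hp p (1/4) 1 = r2 * (1/4)).
  { unfold r2, hellinger_ratio. replace (1/2 * (1/2)) with (1/4) by field. field. }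
  assert (E3 : Hp p (1/16) (1/4) = r2 * (1/16)).
  { rewrite Hp_hom by lra. replace (1/16 / (1/4)) with (1/4) by field. rewrite E2. field. }
  assert (Hr2 : 0 <= r2).
  { pose proof (Hp_antitone p (1/4) 1 ltac:(lra) ltac:(lra) ltac:(lra)). rewrite Hp_1_1 in H. lra. }
  rewrite E1, E2, E3, !sqrt_mult in T by lra.
  replace (sqrt (9/16)) with (3/4) in T
    by (replace (9/16) with (3/4 * (3/4)) by field; rewrite sqrt_square; lra).
  replace (sqrt (1/16)) with (1/4) in T
    by (replace (1/16) with (1/4 * (1/4)) by field; rewrite sqrt_square; lra).
  replace (sqrt (1/4)) with (1/2) in T
    by (replace (1/4) with (1/2 * (1/2)) by field; rewrite sqrt_square; lra).
  assert (sqrt r2 < sqrt r1) by (apply sqrt_lt_1; lra). lra.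
Qed.

Theorem mainTheorem1 :
  (forall p : R, (p <= 1/2 \/ 1 <= p) ->
     is_metric_on_nonneg (fun r t => sqrt (Hp p r t))) /\
  (forall p : R, 1/2 < p < 1 ->
     ~ triangle_on_nonneg (fun r t => sqrt (Hp p r t))).
Proof. split; [apply sqrt_Hp_metric | apply sqrt_Hp_not_triangle]. Qed.
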